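(* Let $\Gamma$ be a finite metric tree and let $f\colon\Gamma\to[0,\infty)$ be a continuous edge-linear function. If $f=\sum_\alpha f_\alpha$ is a unimodal decomposition of $f$, then there is a unimodal decomposition $f=\sum_\alpha g_\alpha$ with the same number of components in which every component $g_\alpha$ is edge-linear.
   Context: A finite metric tree $\Gamma$ is a compact contractible 1-dimensional metric space stratified into finitely many vertices and open edges. A function is edge-linear if its restriction to each edge is affine with respect to the edge's metric. A continuous function $u\colon\Gamma\to[0,\infty)$ with maximal value $M$ is unimodal if its upper excursion sets $u^{-1}([c,\infty))$ are contractible for all $0<c\le M$ (and empty for $c>M$). A unimodal decomposition of $f$ is a finite family of unimodal functions whose pointwise sum is $f$. *)

From HB Require Import structures.
From mathcomp Require Import all_boot all_order all_algebra.
From mathcomp Require Import all_classical all_reals all_analysis.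
Unset Printing Implicit Defensive.
Import Order.TTheory GRing.Theory Num.Theory.
Import numFieldNormedType.Exports.
Local Open Scope classical_set_scope.
Local Open Scope ring_scope.

(* A combinatorial tree on the vertex set 'I_n (n > 0): a symmetric,
   irreflexive, connected edge relation with exactly n-1 (undirected) edges,
   i.e. 2(n-1) ordered pairs. *)
Definition is_tree (n : nat) (E : rel 'I_n) : Prop :=
  (0 < n)%N /\ symmetric E /\ irreflexive E /\
  (forall i j, connect E i j) /\
  #|[set p : 'I_n * 'I_n | E p.1 p.2]| = (2 * n.-1)%N.

Definition bvec (R : realType) (n : nat) (i : 'I_n) : 'rV[R]_n :=
  \row_k (k == i)%:R.

(* The point of the edge {i,j} at parameter t in [0,1] (affine in t, hence
   affine in the arclength coordinate of the edge, whatever its length). *)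
Definition edge_pt (R : realType) (n : nat) (i j : 'I_n) (t : R) : 'rV[R]_n :=
  (1 - t) *: bvec R n i + t *: bvec R n j.

(* The geometric realization Gamma of the tree inside 'rV[R]_n, with the
   subspace topology (which is the topology of the metric tree). *)
Definition realization (R : realType) (n : nat) (E : rel 'I_n) : set 'rV[R]_n :=
  [set x | (exists i, x = bvec R n i) \/
           (exists i j, E i j /\ exists t, 0 <= t <= 1 /\ x = edge_pt R n i j t)].

Definition contractible (R : realType) (T : topologicalType) (A : set T) : Prop :=
  exists x0, A x0 /\
  exists H : T * R -> T,
    {within A `*` [set t : R | 0 <= t <= 1], continuous H} /\
    (forall x t, A x -> 0 <= t <= 1 -> A (H (x, t))) /\
    (forall x, A x -> H (x, 0) = x /\ H (x, 1) = x0).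

Definition unimodal (R : realType) (n : nat) (E : rel 'I_n) (u : 'rV[R]_n -> R) : Prop :=
  let G := realization R n E in
  {within G, continuous u} /\ (forall x, G x -> 0 <= u x) /\
  exists M, (exists x, G x /\ u x = M) /\ (forall x, G x -> u x <= M) /\
    (forall c, 0 < c <= M -> contractible R 'rV[R]_n [set x | G x /\ c <= u x]) /\
    (forall c, M < c -> [set x | G x /\ c <= u x] = set0).

Definition edge_linear (R : realType) (n : nat) (E : rel 'I_n) (u : 'rV[R]_n -> R) : Prop :=
  forall i j, E i j -> exists a b : R,
    forall t, 0 <= t <= 1 -> u (edge_pt R n i j t) = a + b * t.

Definition unimodal_decomposition (R : realType) (n : nat) (E : rel 'I_n)
  (f : 'rV[R]_n -> R) (k : nat) (fs : 'I_k -> 'rV[R]_n -> R) : Prop :=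
  (forall a, unimodal R n E (fs a)) /\
  (forall x, realization R n E x -> f x = \sum_(a < k) fs a x).

From HB Require Import structures.
From mathcomp Require Import all_boot all_order all_algebra.
From mathcomp Require Import all_classical all_reals all_analysis.
From mathcomp Require Import zify ring lra.
Import Order.TTheory GRing.Theory Num.Theory.
Import numFieldNormedType.Exports.
Set Implicit Arguments. Unset Strict Implicit. Unset Printing Implicit Defensive.

(* Replace every component by the edge-linear interpolation of its vertex
   values; since f is edge-linear, the interpolants still add up to f.
   Interpolation preserves unimodality: root the tree at a vertex where the
   component is maximal.  Its vertex values then never increase away from the
   root, because a superlevel set containing a vertex v and the root is path
   connected and every path from v to the root runs through the parent of v.
   Hence every superlevel set of the interpolant is a rooted subtree, which is
   contracted onto the root by pulling all points towards it, one level of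
   depth per unit of time. *)

Local Open Scope classical_set_scope.
Local Open Scope ring_scope.

Lemma within_continuous_slice (R : realType) (T U : topologicalType) (A : set T)
    (H : T * R -> U) (y : T) :
  {within A `*` [set t : R | 0 <= t <= 1], continuous H} -> A y ->
  {within `[0, 1], continuous (fun t : R => H (y, t))}.
Proof.
move=> hH Ay; apply/subspace_continuousP => t It.
have It' : 0 <= t <= 1 by move: It; rewrite /= in_itv.
have := (subspace_continuousP _ H).1 hH (y, t) (conj Ay It').
apply: cvg_trans => P; rewrite !nbhs_simpl /= /within /=.
case=> [[U1 V1] /= [nU nV] UV]; apply: filterS nV => s Vs Is.
have Is' : 0 <= s <= 1 by move: Is; rewrite /= in_itv.
exact: UV (y, s) (conj (nbhs_singleton nU) Vs) (conj Ay Is').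
Qed.

Section Clamp.
Variable R : realType.

Definition clamp01 (y : R) : R := Num.min (Num.max y 0) 1.

Lemma clamp01_ge0 y : 0 <= clamp01 y.
Proof. by rewrite /clamp01 le_min ler01 andbT le_max lexx orbT. Qed.

Lemma clamp01_le1 y : clamp01 y <= 1.
Proof. by rewrite /clamp01 ge_min lexx orbT. Qed.

Lemma clamp01_itv y : 0 <= clamp01 y <= 1.
Proof. by rewrite clamp01_ge0 clamp01_le1. Qed.

Lemma clamp01_id1 y : 1 <= y -> clamp01 y = 1.
Proof. by move=> y1; rewrite /clamp01 max_l ?min_r //; lra. Qed.

Lemma clamp01_id0 y : y <= 0 -> clamp01 y = 0.
Proof. by move=> y0; rewrite /clamp01 max_r // min_l. Qed.

Lemma continuous_clamp01 : continuous clamp01.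
Proof.
move=> y; apply: (@continuous_min _ (R^o) (fun y : R^o => Num.max y 0)).
  by apply: continuous_max; [exact: cvg_id | exact: cst_continuous].
exact: cst_continuous.
Qed.

Lemma min_natb (b : bool) (c : R) : 0 <= c <= 1 -> Num.min (b%:R) c = b%:R * c.
Proof.
by case/andP=> c0 c1; case: b; rewrite ?mul0r ?mul1r; [exact: min_r | exact: min_l].
Qed.

End Clamp.

Section Interpolation.
Variables (R : realType) (n : nat).
Local Notation e := (bvec R n).

(* The coordinates of a point of the realization are its barycentric
   coordinates, so this is the edge-linear extension of the vertex values w. *)
Definition lin_interp (w : 'I_n -> R) (x : 'rV[R]_n) : R := \sum_z x ord0 z * w z.

Lemma lin_interp_bvec w i : lin_interp w (e i) = w i.
Proof.
rewrite /lin_interp (bigD1 i) //= /bvec mxE eqxx mul1r big1 ?addr0 // => z zi.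
by rewrite mxE (negbTE zi) mul0r.
Qed.

Lemma lin_interp_edge_pt w i j t :
  lin_interp w (edge_pt R n i j t) = (1 - t) * w i + t * w j.
Proof.
rewrite -!lin_interp_bvec /lin_interp !mulr_sumr -big_split.
by apply: eq_bigr => z _; rewrite !mxE mulrDl !mulrA.
Qed.

Lemma lin_interp_sum k (F : 'I_k -> 'I_n -> R) x :
  lin_interp (fun z => \sum_(a < k) F a z) x = \sum_(a < k) lin_interp (F a) x.
Proof.
rewrite /lin_interp exchange_big; apply: eq_bigr => z _.
by rewrite mulr_sumr.
Qed.

Lemma continuous_lin_interp w : continuous (lin_interp w).
Proof.
move=> x; rewrite /lin_interp.
have -> : (fun y : 'rV[R]_n => \sum_z y ord0 z * w z) =
          \sum_z (fun y : 'rV[R]_n => y ord0 z * w z).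
  by apply/funext => y; rewrite fct_sumE.
apply: (big_ind (fun F => {for x, continuous F})).
- exact: cst_continuous.
- by move=> F1 F2; apply: continuousD.
- move=> z _; apply: continuousM; last exact: cst_continuous.
  exact: coord_continuous.
Qed.

Lemma edge_pt0 i j : edge_pt R n i j 0 = e i.
Proof. by rewrite /edge_pt subr0 scale1r scale0r addr0. Qed.

Lemma edge_pt1 i j : edge_pt R n i j 1 = e j.
Proof. by rewrite /edge_pt subrr scale0r scale1r add0r. Qed.

Lemma edge_ptC i j t : edge_pt R n j i (1 - t) = edge_pt R n i j t.
Proof. by rewrite /edge_pt (_ : 1 - (1 - t) = t) 1?addrC //; ring. Qed.

Lemma edge_ptE i j t : e i + t *: (e j - e i) = edge_pt R n i j t.
Proof. by apply/rowP => k; rewrite !mxE; ring. Qed.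

Variable E : rel 'I_n.
Local Notation G := (realization R n E).

Lemma realization_bvec i : G (e i).
Proof. by left; exists i. Qed.

Lemma lin_interp_itv w lo hi x : G x ->
  (forall z, lo <= w z <= hi) -> lo <= lin_interp w x <= hi.
Proof.
case=> [[z ->]|[i [j [_ [t [/andP [t0 t1] ->]]]]]] hw; first by rewrite lin_interp_bvec.
rewrite lin_interp_edge_pt; have /andP [a1 a2] := hw i; have /andP [b1 b2] := hw j.
by apply/andP; split; nra.
Qed.

Lemma lin_interp_edge_linear w : edge_linear R n E (lin_interp w).
Proof.
move=> i j _; exists (w i), (w j - w i) => t _.
by rewrite lin_interp_edge_pt; ring.
Qed.

Lemma edge_linear_lin_interp f x : edge_linear R n E f -> G x ->
  f x = lin_interp (fun z => f (e z)) x.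
Proof.
move=> flin [[z ->]|[i [j [eij [t [t01 ->]]]]]]; first by rewrite lin_interp_bvec.
have [a [b fab]] := flin i j eij.
rewrite lin_interp_edge_pt -(edge_pt0 i j) -(edge_pt1 i j) !fab ?t01 ?lexx ?ler01 //.
by ring.
Qed.

End Interpolation.

Section MetricTree.
Variables (R : realType) (n : nat) (E : rel 'I_n).
Hypothesis tree_E : is_tree n E.

Let E_sym : symmetric E := tree_E.2.1.
Let E_irr : irreflexive E := tree_E.2.2.1.
Let E_connect : forall i j, connect E i j := tree_E.2.2.2.1.

Let E_card : #|[set p : 'I_n * 'I_n | E p.1 p.2]%SET| = (2 * n.-1)%N.
Proof.
rewrite -tree_E.2.2.2.2; apply: eq_card => q; rewrite !inE.
by apply/idP/idP => [?|/asboolP //]; apply/asboolP.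
Qed.

Local Notation e := (bvec R n).
Local Notation G := (realization R n E).

Section Rooted.
Variable r : 'I_n.

Definition reachable_in (v : 'I_n) (k : nat) : bool :=
  `[< exists s, size s = k /\ path E r s /\ last r s = v >].

Lemma reachable_in_exists v : exists k, reachable_in v k.
Proof.
have /connectP [s ps ->] := E_connect r v.
by exists (size s); apply/asboolP; exists s.
Qed.

Definition depth v : nat := ex_minn (reachable_in_exists v).

Lemma depth_min v k : reachable_in v k -> (depth v <= k)%N.
Proof. by rewrite /depth; case: ex_minnP => m _; apply. Qed.

Lemma reachable_in_depth v : reachable_in v (depth v).
Proof. by rewrite /depth; case: ex_minnP. Qed.

Lemma depth_root : depth r = 0%N.
Proof. by apply/eqP; rewrite -leqn0; apply: depth_min; apply/asboolP; exists [::]. Qed.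

Lemma depth_eq0 v : depth v = 0%N -> v = r.
Proof.
move=> d0; have /asboolP [s [sz [_ <-]]] := reachable_in_depth v.
by move: sz; rewrite d0; case: s.
Qed.

Lemma depth_gt0 v : v != r -> (0 < depth v)%N.
Proof. by rewrite lt0n; apply: contraNN => /eqP/depth_eq0/eqP. Qed.

Lemma depth_edge u v : E u v -> (depth v <= (depth u).+1)%N.
Proof.
move=> euv; apply: depth_min; have /asboolP [s [sz [ps ls]]] := reachable_in_depth u.
apply/asboolP; exists (rcons s v).
by rewrite size_rcons sz last_rcons rcons_path ps ls euv.
Qed.

Lemma exists_parent v : v != r -> exists u, E u v /\ (depth u).+1 = depth v.
Proof.
move=> vr; have /asboolP [s [sz [ps ls]]] := reachable_in_depth v.
case/lastP: s sz ps ls => [|s x]; first by move=> _ _ /= vE; rewrite vE eqxx in vr.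
rewrite size_rcons last_rcons rcons_path => sz /andP [ps ex] xv.
exists (last r s); split; first by rewrite -xv.
have : (depth (last r s) <= size s)%N by apply: depth_min; apply/asboolP; exists s.
by have := depth_edge ex; rewrite xv => ? ?; lia.
Qed.

Definition parent v : 'I_n :=
  if v == r then r else odflt r [pick u | E u v && ((depth u).+1 == depth v)].

Lemma parent_root : parent r = r.
Proof. by rewrite /parent eqxx. Qed.

Lemma parent_spec v : v != r -> E (parent v) v /\ (depth (parent v)).+1 = depth v.
Proof.
move=> vr; rewrite /parent (negbTE vr); case: pickP => [u /andP [? /eqP] //|none].
by have [u [euv du]] := exists_parent vr; move: (none u); rewrite euv du eqxx.
Qed.

Lemma depth_parent v : depth (parent v) = (depth v).-1.
Proof.
have [->|vr] := eqVneq v r; first by rewrite parent_root depth_root.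
by have [_ <-] := parent_spec vr.
Qed.

(* Counting: the 2(n-1) ordered pairs (v, parent v), (parent v, v) for v != r
   are distinct edges, so they are all the edges. *)
Lemma edge_parentP i j : E i j ->
  (i != r /\ j = parent i) \/ (j != r /\ i = parent j).
Proof.
move=> eij.
pose A := [set (v, parent v) | v in [set~ r]]%SET.
pose B := [set (parent v, v) | v in [set~ r]]%SET.
pose S := [set q : 'I_n * 'I_n | E q.1 q.2]%SET.
have sub : A :|: B \subset S.
  apply/fintype.subsetP => q; rewrite inE => /orP [] /finset.imsetP [v];
  by rewrite !inE => /parent_spec [e _] -> /=; rewrite // E_sym.
have card_half (g : 'I_n -> 'I_n * 'I_n) : injective g -> #|(g @: [set~ r])%SET| = n.-1.
  by move/card_imset ->; rewrite cardsC1 card_ord.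
have disj : (A :&: B = finset.set0)%SET.
  apply/finset.setP => q; rewrite !inE; apply/negbTE/negP => /andP [/finset.imsetP [v]].
  rewrite !inE => /parent_spec [_ dv] -> /finset.imsetP [w].
  rewrite !inE => /parent_spec [_ dw] [vw wv].
  by rewrite -vw in dw; rewrite wv in dv; lia.
have AB : A :|: B = S.
  apply/eqP; rewrite eqEcard sub E_card cardsU disj cards0 subn0.
  by rewrite !card_half //; [lia | move=> v w [] | move=> v w []].
have : (i, j) \in S by rewrite inE.
by rewrite -AB inE => /orP [] /finset.imsetP [v]; rewrite !inE => vr [-> ->]; [left | right].
Qed.

Definition ancestor (u z : 'I_n) : Prop := exists k, iter k parent z = u.

Lemma ancestor_refl z : ancestor z z.
Proof. by exists 0%N. Qed.

Lemma ancestor_parent u z : ancestor u (parent z) -> ancestor u z.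
Proof. by case=> k <-; exists k.+1; rewrite iterSr. Qed.

Lemma ancestor_parentI u z : u != z -> ancestor u z -> ancestor u (parent z).
Proof. by move=> uz [[|k] kz]; [rewrite -kz eqxx in uz | exists k; rewrite -iterSr]. Qed.

Lemma depth_iter_parent k z : depth (iter k parent z) = (depth z - k)%N.
Proof. by elim: k => [|k IH]; rewrite ?subn0 // iterS depth_parent IH subnS. Qed.

Lemma ancestorN_parent z : z != r -> ~ ancestor z (parent z).
Proof.
move=> zr [k]; have := depth_iter_parent k (parent z).
move=> + kz; rewrite kz depth_parent => dz.
by have /depth_eq0/eqP := (ltac:(lia) : depth z = 0%N); rewrite (negbTE zr).
Qed.

Lemma ancestorN_root v : v != r -> ~ ancestor v r.
Proof.
move=> vr [k]; have -> : iter k parent r = r.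
  by elim: k => // k IH; rewrite iterS IH parent_root.
by move/eqP; rewrite eq_sym (negbTE vr).
Qed.

Lemma edge_out_of_subtree v a b : E a b -> ancestor v a -> ~ ancestor v b ->
  b = parent v.
Proof.
move=> /edge_parentP [[_ ->]|[_ ->]] va vb; last by case: vb; exact: ancestor_parent.
have [-> //|av] := eqVneq v a.
by case: vb; exact: ancestor_parentI.
Qed.

Lemma realization_cases x : G x ->
  (exists z, x = e z) \/
  (exists u s, u != r /\ 0 <= s <= 1 /\ x = edge_pt R n (parent u) u s).
Proof.
case=> [[z ->]|[i [j [eij [t [/andP [t0 t1] ->]]]]]]; first by left; exists z.
right; case: (edge_parentP eij) => [[ir ->]|[jr ->]].
  by exists i, (1 - t); rewrite edge_ptC; split => //; split => //; lra.
by exists j, t; split => //; split => //; apply/andP.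
Qed.

Lemma realization_edge u s : u != r -> 0 <= s <= 1 -> G (edge_pt R n (parent u) u s).
Proof.
by move=> /parent_spec [eu _] s01; right; exists (parent u), u; split => //; exists s.
Qed.

(* Its interpolation vanishes on the realization only at [parent v], which
   thus separates the subtree of [v] from the rest of the tree. *)
Definition subtree_sign (v z : 'I_n) : R :=
  if `[< ancestor v z >] then 1 else if z == parent v then 0 else -1.

Lemma subtree_signP v z :
  [\/ subtree_sign v z = 1 /\ ancestor v z, subtree_sign v z = 0 /\ z = parent v |
      subtree_sign v z = -1 /\ ~ ancestor v z /\ z != parent v].
Proof.
rewrite /subtree_sign; case: asboolP => vz; first by constructor 1.
by case: eqVneq => zv; [constructor 2 | constructor 3].
Qed.

Lemma lin_interp_subtree_sign_eq0 v y : G y ->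
  lin_interp (subtree_sign v) y = 0 -> y = e (parent v).
Proof.
case=> [[z ->]|[i [j [eij [t [/andP [t0 t1] ->]]]]]].
  by rewrite lin_interp_bvec; case: (subtree_signP v z) => [[-> _]|[_ ->]|[-> _]] h //;
    exfalso; lra.
rewrite lin_interp_edge_pt.
case: (subtree_signP v i) => [[-> vi]|[-> ip]|[-> [vi ip]]];
case: (subtree_signP v j) => [[-> vj]|[-> jp]|[-> [vj jp]]] => h.
- exfalso; lra.
- by rewrite (_ : t = 1); [rewrite edge_pt1 jp | lra].
- by move: jp; rewrite (edge_out_of_subtree eij vi vj) eqxx.
- by rewrite (_ : t = 0); [rewrite edge_pt0 ip | lra].
- by move: eij; rewrite ip jp E_irr.
- by rewrite (_ : t = 0); [rewrite edge_pt0 ip | lra].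
- by rewrite E_sym in eij; move: ip; rewrite (edge_out_of_subtree eij vj vi) eqxx.
- by rewrite (_ : t = 1); [rewrite edge_pt1 jp | lra].
- exfalso; lra.
Qed.

Lemma unimodal_parent_ge f : unimodal R n E f -> (forall v, f (e v) <= f (e r)) ->
  forall v, v != r -> f (e v) <= f (e (parent v)).
Proof.
move=> [_ [f_ge0 [M [_ [f_leM [f_contr _]]]]]] f_root v vr.
have [c_le0|c_gt0] := lerP (f (e v)) 0.
  exact: le_trans c_le0 (f_ge0 _ (realization_bvec R E (parent v))).
have [->|pr] := eqVneq (parent v) r; first exact: f_root.
set c := f (e v); pose A := [set x | G x /\ c <= f x].
have cM : 0 < c <= M by rewrite c_gt0 f_leM //; exact: realization_bvec.
have [x0 [_ [H [H_cont [H_in H_ends]]]]] := f_contr c cM.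
pose s := lin_interp (subtree_sign v).
have cross y : A y -> Num.min (s y) (s x0) <= 0 <= Num.max (s y) (s x0) ->
    c <= f (e (parent v)).
  move=> Ay s_y; have [H0 H1] := H_ends y Ay; rewrite -H0 -H1 in s_y.
  have s_cont : {within `[0, 1], continuous (fun t => s (H (y, t)))}.
    apply: (@within_continuous_comp _ _ _ _ (fun t => H (y, t)) s).
      by move=> ? _; exact: continuous_lin_interp.
    exact: within_continuous_slice H_cont Ay.
  have [t t01 st] := IVT ler01 s_cont s_y.
  move: t01; rewrite in_itv /= => t01.
  have [Gt ct] := H_in y t Ay t01.
  by rewrite -(lin_interp_subtree_sign_eq0 Gt st).
have [s0_le0|s0_gt0] := lerP (s x0) 0.
  apply: (cross (e v)); first by split; [exact: realization_bvec|].
  rewrite /s lin_interp_bvec /subtree_sign asboolT ?ge_min ?le_max ?s0_le0 ?ler01 ?orbT //.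
  exact: ancestor_refl.
apply: (cross (e r)); first by split; [exact: realization_bvec | exact: f_root].
rewrite /s lin_interp_bvec /subtree_sign asboolF ?(negbTE pr) 1?eq_sym ?(negbTE pr).
  by rewrite ge_min le_max lerN10 (ltW s0_gt0) orbT.
exact: ancestorN_root.
Qed.

Definition subtree_ind (u z : 'I_n) : R := `[< ancestor u z >]%:R.

Lemma subtree_ind_root u : u != r -> subtree_ind u r = 0.
Proof. by move=> ur; rewrite /subtree_ind asboolF //; exact: ancestorN_root. Qed.

Lemma subtree_ind_parent u z : z != r ->
  subtree_ind u z = subtree_ind u (parent z) + (u == z)%:R.
Proof.
move=> zr; rewrite /subtree_ind; have [->|uz] := eqVneq u z.
  by rewrite (asboolT (ancestor_refl z)) (asboolF (ancestorN_parent zr)) add0r.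
rewrite mulr0n addr0 (@asbool_equiv_eq (ancestor u z) (ancestor u (parent z))) //.
by split; [exact: ancestor_parentI | exact: ancestor_parent].
Qed.

Definition edge_vec (u : 'I_n) : 'rV[R]_n := e u - e (parent u).

Lemma sum_delta_scale (F : 'I_n -> 'rV[R]_n) z : z != r ->
  \sum_(u | u != r) (u == z)%:R *: F u = F z.
Proof.
move=> zr; rewrite (bigD1 z) //= eqxx scale1r big1 ?addr0 // => u /andP [_ uz].
by rewrite (negbTE uz) scale0r.
Qed.

(* The point reached at time [tau] by the walk from the root to [z] that
   crosses the edge from [parent u] to [u] during [depth u - 1 <= tau <= depth u]. *)
Definition root_walk (z : 'I_n) (tau : R) : 'rV[R]_n := e r +
  \sum_(u | u != r) (subtree_ind u z * clamp01 (tau - (depth u)%:R + 1)) *: edge_vec u.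

Lemma root_walk_root tau : root_walk r tau = e r.
Proof.
rewrite /root_walk big1 ?addr0 // => u ur.
by rewrite subtree_ind_root ?mul0r ?scale0r.
Qed.

Lemma root_walk_parent z tau : z != r ->
  root_walk z tau = root_walk (parent z) tau + clamp01 (tau - (depth z)%:R + 1) *: edge_vec z.
Proof.
move=> zr; rewrite /root_walk.
under eq_bigr => u _ do rewrite (subtree_ind_parent u zr) mulrDl scalerDl.
rewrite big_split /= addrA; congr (_ + _).
under eq_bigr => u _ do rewrite -scalerA.
exact: sum_delta_scale.
Qed.

Lemma depth_parentS z : z != r -> (depth (parent z)).+1 = depth z.
Proof. by case/parent_spec. Qed.

Lemma root_walk_end z tau : (depth z)%:R <= tau -> root_walk z tau = e z.
Proof.
have [m] := ubnP (depth z); elim: m z => // m IH z dz tau_z.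
have [->|zr] := eqVneq z r; first exact: root_walk_root.
have dp := depth_parentS zr.
rewrite root_walk_parent // IH; first last.
- by apply: le_trans tau_z; rewrite ler_nat; lia.
- by lia.
rewrite clamp01_id1; last by lra.
by rewrite scale1r /edge_vec addrC subrK.
Qed.

Lemma root_walk0 z : root_walk z 0 = e r.
Proof.
rewrite /root_walk big1 ?addr0 // => u ur.
rewrite clamp01_id0 ?mulr0 ?scale0r //.
have : 1 <= (depth u)%:R :> R by rewrite ler1n depth_gt0.
lra.
Qed.

(* [subtree_coord u x] is the fraction of the edge above [u] covered by the
   path from the root to [x]; the contraction stops this path at time
   [max_depth * (1 - t)] of the root walk. *)
Definition subtree_coord (u : 'I_n) (x : 'rV[R]_n) : R := lin_interp (subtree_ind u) x.

Definition max_depth : R := (\max_u depth u)%:R.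

Definition contraction (q : 'rV[R]_n * R) : 'rV[R]_n := e r +
  \sum_(u | u != r) Num.min (subtree_coord u q.1)
                            (clamp01 (max_depth * (1 - q.2) - (depth u)%:R + 1)) *: edge_vec u.

Lemma depth_le_max u : (depth u)%:R <= max_depth.
Proof. by rewrite /max_depth ler_nat; exact: (leq_bigmax u). Qed.

Lemma contraction_bvec z t : contraction (e z, t) = root_walk z (max_depth * (1 - t)).
Proof.
rewrite /contraction /root_walk /=; congr (_ + _); apply: eq_bigr => u _.
by rewrite /subtree_coord lin_interp_bvec /subtree_ind min_natb // clamp01_itv.
Qed.

Lemma contraction_edge u0 s t : u0 != r ->
  contraction (edge_pt R n (parent u0) u0 s, t) =
  root_walk (parent u0) (max_depth * (1 - t)) +
    Num.min s (clamp01 (max_depth * (1 - t) - (depth u0)%:R + 1)) *: edge_vec u0.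
Proof.
move=> u0r; rewrite /contraction /root_walk /= -addrA; congr (_ + _).
set tau := max_depth * (1 - t).
rewrite -(sum_delta_scale
  (fun u => Num.min s (clamp01 (tau - (depth u)%:R + 1)) *: edge_vec u) u0r).
rewrite -big_split /=; apply: eq_bigr => u _.
rewrite /subtree_coord lin_interp_edge_pt (subtree_ind_parent u u0r).
have [->|uu0] := eqVneq u u0.
  rewrite /subtree_ind (asboolF (ancestorN_parent u0r)) /= mul0r scale0r.
  by rewrite mulr0 !add0r mulr1 scale1r.
rewrite /= scale0r !addr0 (_ : _ * _ + _ * _ = subtree_ind u (parent u0)); last by ring.
by rewrite min_natb // clamp01_itv.
Qed.

Lemma contraction0 x : G x -> contraction (x, 0) = x.
Proof.
case/realization_cases => [[z ->]|[u [s [ur [/andP [s0 s1] ->]]]]].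
  by rewrite contraction_bvec subr0 mulr1 root_walk_end // depth_le_max.
rewrite contraction_edge // subr0 mulr1 root_walk_end ?depth_le_max //.
rewrite clamp01_id1 ?min_l //; last by have := depth_le_max u; lra.
by rewrite /edge_vec edge_ptE.
Qed.

Lemma contraction1 x : G x -> contraction (x, 1) = e r.
Proof.
case/realization_cases => [[z ->]|[u [s [ur [/andP [s0 s1] ->]]]]].
  by rewrite contraction_bvec subrr mulr0 root_walk0.
rewrite contraction_edge // subrr mulr0 root_walk0 clamp01_id0 ?min_r ?scale0r ?addr0 //.
have : 1 <= (depth u)%:R :> R by rewrite ler1n depth_gt0.
lra.
Qed.

Lemma continuous_contraction : continuous contraction.
Proof.
move=> q; apply: continuousD; first exact: cst_continuous.
have -> : (fun q : 'rV[R]_n * R => \sum_(u | u != r) Num.min (subtree_coord u q.1)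
            (clamp01 (max_depth * (1 - q.2) - (depth u)%:R + 1)) *: edge_vec u) =
  \sum_(u | u != r) (fun q : 'rV[R]_n * R => Num.min (subtree_coord u q.1)
            (clamp01 (max_depth * (1 - q.2) - (depth u)%:R + 1)) *: edge_vec u).
  by apply/funext => y; rewrite fct_sumE.
apply: (big_ind (fun F => {for q, continuous F})).
- exact: cst_continuous.
- by move=> F1 F2; apply: continuousD.
move=> u _; apply: continuousZr_tmp; apply: continuous_min.
  apply: (@continuous_comp _ _ _ fst (subtree_coord u)); first exact: cvg_fst.
  exact: continuous_lin_interp.
apply: continuous_comp; last exact: continuous_clamp01.
apply: continuousD; last exact: cst_continuous.
apply: continuousB; last exact: cst_continuous.
apply: continuousM; first exact: cst_continuous.
by apply: continuousB; [exact: cst_continuous | exact: cvg_snd].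
Qed.

Section Superlevel.
Variable w : 'I_n -> R.
Hypothesis w_parent : forall v, v != r -> w v <= w (parent v).

Lemma root_walk_superlevel z tau : 0 <= tau ->
  G (root_walk z tau) /\ w z <= lin_interp w (root_walk z tau).
Proof.
move=> tau0; have [m] := ubnP (depth z); elim: m z => // m IH z dz.
have [->|zr] := eqVneq z r.
  by rewrite root_walk_root lin_interp_bvec; split; [exact: realization_bvec|].
have dp := depth_parentS zr.
have [pz_le|pz_gt] := lerP (depth (parent z))%:R tau.
  rewrite root_walk_parent // root_walk_end // /edge_vec edge_ptE.
  split; first exact/realization_edge/clamp01_itv.
  have /andP [c0 c1] := clamp01_itv (tau - (depth z)%:R + 1).
  by rewrite lin_interp_edge_pt; have := w_parent zr; nra.
rewrite root_walk_parent // clamp01_id0 ?scale0r ?addr0; last first.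
  have : (depth z)%:R = (depth (parent z))%:R + 1 :> R by rewrite -dp -addn1 natrD.
  lra.
have [Gp wp] := IH (parent z) ltac:(lia).
by split => //; apply: le_trans (w_parent zr) wp.
Qed.

Lemma contraction_superlevel c x t : G x -> c <= lin_interp w x -> 0 <= t <= 1 ->
  G (contraction (x, t)) /\ c <= lin_interp w (contraction (x, t)).
Proof.
move=> Gx cx /andP [t0 t1].
have tau0 : 0 <= max_depth * (1 - t) by rewrite mulr_ge0 ?ler0n ?subr_ge0.
case/realization_cases: Gx cx => [[z ->]|[u [s [ur [/andP [s0 s1] ->]]]]] cx.
  rewrite contraction_bvec; have [Gz wz] := root_walk_superlevel z tau0.
  by split => //; apply: le_trans wz; rewrite -(lin_interp_bvec w z).
rewrite contraction_edge //; rewrite lin_interp_edge_pt in cx.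
set tau := max_depth * (1 - t) in tau0 *.
have wu := w_parent ur; have du := depth_parentS ur.
have [pu_le|pu_gt] := lerP (depth (parent u))%:R tau.
  rewrite root_walk_end // /edge_vec edge_ptE.
  set mu := Num.min s _.
  have mu_s : 0 <= mu <= s by rewrite ge_min lexx le_min s0 clamp01_ge0.
  split; first by apply: realization_edge => //; apply/andP; split; lra.
  by rewrite lin_interp_edge_pt; nra.
rewrite clamp01_id0; last first.
  have : (depth u)%:R = (depth (parent u))%:R + 1 :> R by rewrite -du -addn1 natrD.
  lra.
rewrite min_r // scale0r addr0.
have [Gp wp] := root_walk_superlevel (parent u) tau0.
by split => //; nra.
Qed.

Lemma contractible_superlevel c : c <= w r ->
  contractible R 'rV[R]_n [set x | G x /\ c <= lin_interp w x].
Proof.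
move=> c_le; exists (e r).
split; first by split; [exact: realization_bvec | rewrite lin_interp_bvec].
exists contraction; split; first exact/continuous_subspaceT/continuous_contraction.
split; first by move=> x t [Gx cx] t01; exact: contraction_superlevel.
by move=> x [Gx _]; rewrite contraction0 ?contraction1.
Qed.

End Superlevel.
End Rooted.

Lemma unimodal_lin_interp f :
  unimodal R n E f -> unimodal R n E (lin_interp (fun z => f (e z))).
Proof.
move=> f_uni; have [_ [f_ge0 _]] := f_uni; set w := fun z => f (e z).
pose r := [arg max_(i > Ordinal tree_E.1) w i]%O.
have w_max v : w v <= w r by rewrite /r; case: arg_maxP => // i _; apply.
have w_itv z : 0 <= w z <= w r by rewrite w_max andbT; exact/f_ge0/realization_bvec.
have interp_itv x : G x -> 0 <= lin_interp w x <= w r.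
  by move=> Gx; exact: lin_interp_itv Gx w_itv.
split; first exact/continuous_subspaceT/continuous_lin_interp.
split; first by move=> x /interp_itv /andP [].
exists (w r); split.
  by exists (e r); rewrite lin_interp_bvec; split; [exact: realization_bvec|].
split; first by move=> x /interp_itv /andP [].
split; first by move=> c /andP [_ cM]; exact/contractible_superlevel/cM/unimodal_parent_ge.
by move=> c Mc; apply/seteqP; split => x // [/interp_itv /andP [_ xM] cx]; lra.
Qed.

End MetricTree.

Unset Implicit Arguments.

Theorem lemma2p2 (R : realType) (n : nat) (E : rel 'I_n)
  (f : 'rV[R]_n -> R) (k : nat) (fs : 'I_k -> 'rV[R]_n -> R) :
  is_tree n E ->
  {within realization R n E, continuous f} ->
  (forall x, realization R n E x -> 0 <= f x) ->
  edge_linear R n E f ->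
  unimodal_decomposition R n E f k fs ->
  exists gs : 'I_k -> 'rV[R]_n -> R,
    unimodal_decomposition R n E f k gs /\ (forall a, edge_linear R n E (gs a)).
Proof.
move=> tree_E _ _ f_lin [fs_uni fs_sum].
exists (fun a => lin_interp (fun z => fs a (bvec R n z))).
split; last by move=> a; exact: lin_interp_edge_linear.
split; first by move=> a; exact: unimodal_lin_interp.
move=> x Gx; rewrite (edge_linear_lin_interp f_lin Gx) -lin_interp_sum.
by congr lin_interp; apply/funext => z; exact/fs_sum/realization_bvec.
Qed.
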